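(* Every graph $G$ satisfies $\chi'_{qm}(G)\le 3$.
   Context: All graphs are simple and finite. A $k$-edge-coloring of $G$ is any map $c:E(G)\to\{1,\dots,k\}$ (adjacent edges may share colors). It is quasi-majority if every vertex $v$ is incident to at most $\lceil d(v)/2\rceil$ edges of each single color. $\chi'_{qm}(G)$ denotes the least $k$ such that $G$ has a quasi-majority $k$-edge-coloring. *)

From mathcomp Require Import all_boot.
Set Implicit Arguments. Unset Strict Implicit. Unset Printing Implicit Defensive.

(* A finite simple graph: vertex type V (finType), adjacency relation e that is
   symmetric and irreflexive.  An edge uv is represented by the 2-set [set u; v]. *)
Definition simple_graph (V : finType) (e : rel V) : Prop :=
  symmetric e /\ irreflexive e.

Definition nbhd (V : finType) (e : rel V) (v : V) : {set V} := [set u | e v u].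
Definition deg (V : finType) (e : rel V) (v : V) : nat := #|nbhd e v|.

(* A k-edge-coloring: a colour in 'I_k for every edge (the values of c on
   non-edges are irrelevant). *)
Definition edge_coloring (V : finType) (k : nat) := {set V} -> 'I_k.

Definition quasi_majority (V : finType) (e : rel V) (k : nat)
  (c : edge_coloring V k) : Prop :=
  forall (v : V) (i : 'I_k),
    #|[set u in nbhd e v | c [set v; u] == i]| <= uphalf (deg e v).

Definition qm_colorable (V : finType) (e : rel V) (k : nat) : Prop :=
  exists c : edge_coloring V k, quasi_majority e c.

From mathcomp Require Import all_boot.
Set Implicit Arguments. Unset Strict Implicit. Unset Printing Implicit Defensive.

(* Induction on the number of edges. Delete an edge ab and colour the rest.
   At a vertex v of even degree d in G - ab we have uphalf (d + 1) = uphalf d + 1,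
   so any colour may be given to ab at v. If d is odd then uphalf (d + 1) = uphalf d,
   but at most one colour is saturated (used uphalf d times) at v, since two such
   colours would account for d + 1 > d edges. Hence each endpoint forbids at most
   one colour, and with three colours one is left for ab. *)

Definition color_deg (V : finType) (e : rel V) k (c : edge_coloring V k)
    (v : V) (i : 'I_k) : nat :=
  #|[set u in nbhd e v | c [set v; u] == i]|.

Definition edges (V : finType) (e : rel V) : {set V * V} := [set p | e p.1 p.2].

Definition del_edge (V : finType) (e : rel V) (E : {set V}) : rel V :=
  fun x y => e x y && ([set x; y] != E).

Definition recolor (V : finType) k (c : edge_coloring V k) (E : {set V})
    (i : 'I_k) : edge_coloring V k :=
  fun S => if S == E then i else c S.

(* [i] can be given to one more edge at [v] without exceeding the bound at [v]
   (see [leq_add_uphalfS]). *)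
Definition free_color (V : finType) (e : rel V) k (c : edge_coloring V k)
    (v : V) (i : 'I_k) : bool :=
  ~~ odd (deg e v) || (color_deg e c v i < uphalf (deg e v)).

Lemma set2_eq_l (T : finType) (x y u : T) :
  x != y -> ([set x; u] == [set x; y]) = (u == y).
Proof.
move=> neq_xy; apply/eqP/eqP => [eq_E | -> //].
have : u \in [set x; y] by rewrite -eq_E !inE eqxx orbT.
rewrite !inE => /orP[/eqP eq_ux | /eqP //].
have : y \in [set x; u] by rewrite eq_E !inE eqxx orbT.
by rewrite eq_ux !inE orbb eq_sym (negbTE neq_xy).
Qed.

Section DeleteEdge.

Variables (V : finType) (e : rel V) (k : nat) (c : edge_coloring V k) (col : 'I_k).

Section EdgeEnd.

Variables (x y : V).
Hypotheses (exy : e x y) (neq_xy : x != y).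

Lemma deg_del_edge_end : deg e x = (deg (del_edge e [set x; y]) x).+1.
Proof.
rewrite /deg (cardD1 y) [y \in _]inE exy add1n; congr _.+1.
apply: eq_card => u; rewrite !inE /del_edge set2_eq_l //.
by case: (u =P y) => [-> | _]; rewrite ?andbF ?andbT.
Qed.

Lemma color_deg_recolor_end (i : 'I_k) :
  color_deg e (recolor c [set x; y] col) x i =
  color_deg (del_edge e [set x; y]) c x i + (col == i).
Proof.
rewrite /color_deg (cardD1 y) !inE exy /recolor eqxx addnC; congr (_ + _).
apply: eq_card => u; rewrite !inE /del_edge set2_eq_l //.
by case: (u =P y) => [-> | _]; rewrite ?andbF ?andbT.
Qed.

End EdgeEnd.

Section OffEdge.

Variables (E : {set V}) (v : V).
Hypothesis vNE : v \notin E.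

Let set2_neq u : ([set v; u] == E) = false.
Proof. by apply: contraNF vNE => /eqP <-; rewrite !inE eqxx. Qed.

Lemma deg_del_edge_off : deg (del_edge e E) v = deg e v.
Proof. by apply: eq_card => u; rewrite !inE /del_edge set2_neq andbT. Qed.

Lemma color_deg_recolor_off (i : 'I_k) :
  color_deg e (recolor c E col) v i = color_deg (del_edge e E) c v i.
Proof. by apply: eq_card => u; rewrite !inE /del_edge /recolor set2_neq andbT. Qed.

End OffEdge.

End DeleteEdge.

Section Saturation.

Variables (V : finType) (e : rel V) (k : nat) (c : edge_coloring V k) (v : V).

Lemma color_deg_pair_le (i j : 'I_k) :
  i != j -> color_deg e c v i + color_deg e c v j <= deg e v.
Proof.
move=> neq_ij; rewrite /color_deg.
set A := [set u in _ | c _ == i]; set B := [set u in _ | c _ == j].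
have disjAB : [disjoint A & B].
  rewrite -setI_eq0; apply/eqP/setP => u; rewrite !inE.
  by case: eqP => [-> | _]; rewrite ?andbF ?(negbTE neq_ij) ?andbF.
have /leqifP := leq_card_setU A B; rewrite disjAB => /eqP <-.
by apply/subset_leq_card/subsetP => u; rewrite !inE => /orP[] /andP[].
Qed.

Lemma saturated_color_unique (i j : 'I_k) :
  odd (deg e v) ->
  uphalf (deg e v) <= color_deg e c v i -> uphalf (deg e v) <= color_deg e c v j ->
  i = j.
Proof.
move=> odd_deg sat_i sat_j; apply/eqP; apply: contraTT (leq_add sat_i sat_j).
by move=> /color_deg_pair_le le_deg; rewrite -ltnNge addnn odd_uphalfK.
Qed.

Lemma card_not_free_color_le1 : #|[set i | ~~ free_color e c v i]| <= 1.
Proof.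
apply/card_le1_eqP => i j; rewrite !inE !negb_or !negbK -!leqNgt.
by case/andP=> odd_deg sat_i /andP[_ sat_j]; apply: saturated_color_unique.
Qed.

End Saturation.

Lemma leq_add_uphalfS d x (b : bool) :
  x <= uphalf d -> (b -> ~~ odd d || (x < uphalf d)) -> x + b <= uphalf d.+1.
Proof.
rewrite [uphalf d.+1]/= uphalf_half => le_x; case: b => [/(_ isT) | _].
  by rewrite addn1 ltnS; case: (odd d) le_x => //= le_x _; rewrite add0n in le_x.
by rewrite addn0 (leq_trans le_x) // addnC -addn1 leq_add2l leq_b1.
Qed.

Lemma exists_notin_setU2 (T : finType) (A B : {set T}) :
  #|A| + #|B| < #|T| -> exists2 x, x \notin A & x \notin B.
Proof.
move=> small; have : ~: (A :|: B) != set0.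
  rewrite -card_gt0 -(ltn_add2l #|A :|: B|) cardsC addn0.
  exact: leq_ltn_trans (leq_card_setU A B) small.
by case/set0Pn => x; rewrite !inE negb_or => /andP[]; exists x.
Qed.

Section ExtendColoring.

Variables (V : finType) (e : rel V) (k : nat) (c : edge_coloring V k).
Variables (a b : V) (col : 'I_k).
Hypotheses (sym_e : symmetric e) (eab : e a b) (neq_ab : a != b).
Let e' := del_edge e [set a; b].
Hypothesis qm_c : quasi_majority e' c.
Hypotheses (free_a : free_color e' c a col) (free_b : free_color e' c b col).

Lemma quasi_majority_recolor : quasi_majority e (recolor c [set a; b] col).
Proof.
move=> v i; change (color_deg e (recolor c [set a; b] col) v i <= uphalf (deg e v)).
have at_end x y : e x y -> x != y -> [set x; y] = [set a; b] ->
    free_color e' c x col ->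
    color_deg e (recolor c [set a; b] col) x i <= uphalf (deg e x).
  move=> exy neq_xy eq_E free_x.
  rewrite -eq_E color_deg_recolor_end // (deg_del_edge_end exy neq_xy) eq_E.
  by apply: leq_add_uphalfS; [exact: qm_c | case: eqP => // <-].
have [|vNE] := boolP (v \in [set a; b]).
  rewrite !inE => /orP[] /eqP ->; first exact: (at_end a b).
  by apply: (at_end b a) => //; [rewrite sym_e | rewrite eq_sym | exact: setUC].
by rewrite color_deg_recolor_off // -(deg_del_edge_off e vNE); exact: qm_c.
Qed.

End ExtendColoring.

Lemma quasi_majority_edgeless (V : finType) (e : rel V) k (c : edge_coloring V k) :
  edges e = set0 -> quasi_majority e c.
Proof.
move=> no_edges v i; rewrite (_ : [set u in _ | _] = set0) ?cards0 //.
apply/setP => u; rewrite !inE.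
have : (v, u) \notin edges e by rewrite no_edges inE.
by rewrite inE => /negbTE ->.
Qed.

Lemma edges_del_edge_proper (V : finType) (e : rel V) (a b : V) :
  e a b -> edges (del_edge e [set a; b]) \proper edges e.
Proof.
move=> eab; apply/properP; split.
  by apply/subsetP => p; rewrite !inE => /andP[].
by exists (a, b); rewrite !inE /del_edge /= ?eab // eqxx.
Qed.

Lemma simple_graph_del_edge (V : finType) (e : rel V) (E : {set V}) :
  simple_graph e -> simple_graph (del_edge e E).
Proof.
case=> sym_e irr_e; split=> [x y | x]; rewrite /del_edge ?irr_e //.
by rewrite sym_e setUC.
Qed.

Theorem quasi_majority_colorable (V : finType) (e : rel V) k :
  simple_graph e -> 2 < k -> qm_colorable e k.
Proof.
move=> + k_gt2; have [n] := ubnP #|edges e|; elim: n e => // n IH e.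
rewrite ltnS => size_e simple_e; have [sym_e irr_e] := simple_e.
have [no_edges | /set0Pn[[a b]]] := eqVneq (edges e) set0.
  by exists (fun=> Ordinal (ltnW (ltnW k_gt2))); apply: quasi_majority_edgeless.
rewrite inE /= => eab.
have neq_ab : a != b by apply: contraTneq eab => ->; rewrite irr_e.
set e' := del_edge e [set a; b].
have [c qm_c] : qm_colorable e' k.
  apply: IH (simple_graph_del_edge _ simple_e).
  exact: leq_trans (proper_card (edges_del_edge_proper eab)) size_e.
have [col] : exists2 col, col \notin [set i | ~~ free_color e' c a i]
                        & col \notin [set i | ~~ free_color e' c b i].
  apply: exists_notin_setU2; rewrite card_ord; apply: leq_ltn_trans k_gt2.
  exact: leq_add (card_not_free_color_le1 e' c a) (card_not_free_color_le1 e' c b).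
rewrite !inE !negbK => free_a free_b.
by exists (recolor c [set a; b] col); apply: quasi_majority_recolor.
Qed.

Theorem mainTheorem13 (V : finType) (e : rel V) :
  simple_graph e -> exists k, k <= 3 /\ qm_colorable e k.
Proof. by move=> simple_e; exists 3; split; last exact: quasi_majority_colorable. Qed.
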